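(* Let $A$ be a $d\times n$ matrix with integer entries and $\ker(A)\cap\mathbb R^{n}_{\ge0}=\{\mathbf 0\}$. Let $\mathbf c$ be a column of $A$, let $\mathbf c'\in\mathbb Z^{d}$, and let $A'$ be the matrix obtained from $A$ by replacing the column $\mathbf c$ with $\mathbf c'$. If $p_{A'}(\mathbf c)\ge p_A(\mathbf c)$, then $p_{A'}(\mathbf b)\ge p_A(\mathbf b)$ for all $\mathbf b\in\mathbb Z^d_{\ge0}$.
   Context: For an integer matrix $M$ with $r$ columns and $\mathbf b$ a vector, $p_M(\mathbf b)=\#\{\mathbf x\in\mathbb Z^r_{\ge0}:M\mathbf x=\mathbf b\}$ (the vector partition function; counted as a cardinality). *)

From HB Require Import structures.
From mathcomp Require Import all_boot all_order all_algebra.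
From mathcomp Require Import boolp classical_sets cardinality reals.
From mathcomp Require Import Rstruct.
Set Implicit Arguments. Unset Strict Implicit. Unset Printing Implicit Defensive.
Import Order.TTheory GRing.Theory Num.Theory.
Local Open Scope ring_scope.
Local Open Scope classical_set_scope.

(* The solution set {x in Z^r_{>=0} : M x = b}; the vector partition function
   p_M(b) is its cardinality, compared via the cardinal order #<=. *)
Definition vpsol (d r : nat) (M : 'M[int]_(d, r)) (b : 'cV[int]_d)
  : set 'cV[int]_r :=
  [set x : 'cV[int]_r | (forall i, 0 <= x i 0) /\ M *m x = b].

Definition replace_col (d n : nat) (A : 'M[int]_(d, n)) (j : 'I_n)
  (c' : 'cV[int]_d) : 'M[int]_(d, n) :=
  \matrix_(i < d, k < n) (if k == j then c' i 0 else A i k).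

Definition pointed_kernel (d n : nat) (A : 'M[int]_(d, n)) : Prop :=
  forall x : 'cV[Rdefinitions.R]_n,
    (forall i, 0 <= x i 0) ->
    map_mx (fun z : int => z%:~R) A *m x = 0 -> x = 0.

(** If some solution x0 of A' x = c uses the new column (x0_j > 0), then
    x |-> x + x_j (x0 - e_j), which trades each use of the column c for the
    representation x0 of c, injects the solutions of A x = b into those of
    A' x = b.  Otherwise every solution of A' x = c avoids column j, so it is
    also a solution of A x = c, and e_j is a further one.  Because the kernel
    is pointed, two comparable solutions of A x = b coincide, so by Dickson's
    lemma the solution sets are finite, and a finite set cannot inject into a
    proper subset of itself: this contradicts p_A'(c) >= p_A(c). *)

From HB Require Import structures.
From mathcomp Require Import all_boot all_order all_algebra finmap.
From mathcomp Require Import boolp classical_sets functions cardinality reals.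
From mathcomp Require Import Rstruct ring.
Import Order.TTheory GRing.Theory Num.Theory.
Local Open Scope ring_scope.
Local Open Scope card_scope.
Local Open Scope classical_set_scope.

Lemma nondecreasing_subseq (v : nat -> nat) :
  exists psi : nat -> nat,
    {homo psi : a b / (a < b)%N} /\ {homo v \o psi : a b / (a <= b)%N}.
Proof.
have next m : {i | (m < i)%N & forall k, (m < k)%N -> (v i <= v k)%N}.
  apply: cid2; pose P x := `[< exists2 k, (m < k)%N & v k = x >].
  have [|x /asboolP[k mk <-] vk_min] := ex_minnP (ex_intro P (v m.+1) _).
    by apply/asboolP; exists m.+1.
  by exists k => // k' mk'; apply: vk_min; apply/asboolP; exists k'.
pose f m := s2val (next m).
have f_gt m : (m < f m)%N := s2valP (next m).
have f_min m k : (m < k)%N -> (v (f m) <= v k)%N := s2valP' (next m) k.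
exists (fun a => iter a.+1 f 0); split.
  by apply: (homo_ltn ltn_trans) => i; apply: f_gt.
apply: (homo_leq leqnn leq_trans) => i /=.
by apply: f_min; apply: ltn_trans (f_gt _) (f_gt _).
Qed.

Lemma dickson {n} (u : nat -> 'I_n -> nat) :
  exists i k, (i < k)%N /\ forall t, (u i t <= u k t)%N.
Proof.
suff [phi [phi_incr phi_mono]] : exists phi : nat -> nat,
    {homo phi : a b / (a < b)%N} /\
    forall t, {homo (fun a => u (phi a) t) : a b / (a <= b)%N}.
  by exists (phi 0%N), (phi 1%N); split=> [|t]; [exact: phi_incr|exact: phi_mono].
suff /(_ (enum 'I_n))[phi [phi_incr phi_mono]] :
    forall s : seq 'I_n, exists phi : nat -> nat,
    {homo phi : a b / (a < b)%N} /\
    forall t, t \in s -> {homo (fun a => u (phi a) t) : a b / (a <= b)%N}.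
  by exists phi; split=> // t; apply: phi_mono; rewrite mem_enum.
elim=> [|t s [phi [phi_incr phi_mono]]]; first by exists id; split.
have [psi [psi_incr psi_mono]] := nondecreasing_subseq (fun a => u (phi a) t).
exists (phi \o psi); split=> [a b /psi_incr /phi_incr //|t'].
rewrite inE => /predU1P[-> //|/phi_mono t'_mono] a b.
rewrite leq_eqVlt => /predU1P[-> //|/psi_incr/ltnW]; exact: t'_mono.
Qed.

Lemma finite_card_le_sub_eq {T : choiceType} {A B : set T} :
  finite_set A -> B `<=` A -> A #<= B -> B = A.
Proof.
move=> finA BA leAB; have finB := sub_finite_set BA finA.
apply: fset_set_inj => //; apply/eqP; rewrite eqEfcard; apply/andP; split.
  by rewrite -fset_set_sub.
have /finite_setP[m Bm] := finB.
by rewrite (card_fset_set Bm) geq_card_fset_set // -(card_le_eqr Bm).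
Qed.

Lemma mul_replace_col {d n : nat} (A : 'M[int]_(d, n)) j c' (x : 'cV[int]_n) :
  replace_col A j c' *m x = A *m x + x j 0 *: (c' - col j A).
Proof.
have -> : replace_col A j c' = A + (c' - col j A) *m delta_mx 0 j.
  apply/matrixP => i k; rewrite !mxE big_ord1 !mxE.
  by case: eqP => [->|_]; rewrite ?mulr1 ?mulr0 ?addr0 // addrCA subrr addr0.
by rewrite mulmxDl -mulmxA -rowE [row j x]mx11_scalar mxE mul_mx_scalar.
Qed.

Lemma col_replace_col {d n : nat} (A : 'M[int]_(d, n)) j c' :
  col j (replace_col A j c') = c'.
Proof. by apply/matrixP => i k; rewrite !mxE eqxx [k]ord1. Qed.

Lemma vpsol_delta_col {d n : nat} (A : 'M[int]_(d, n)) j :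
  vpsol A (col j A) (delta_mx j 0).
Proof. by split=> [i|]; rewrite ?colE // mxE; case: (_ && _). Qed.

Lemma vpsol_replace_col_sub {d n : nat} {A : 'M[int]_(d, n)} {j c' b} :
  (forall x, vpsol (replace_col A j c') b x -> x j 0 = 0) ->
  vpsol (replace_col A j c') b `<=` vpsol A b.
Proof.
move=> xj0 x Sx; have [x_ge0 A'x] := Sx; split=> //.
by rewrite -A'x mul_replace_col (xj0 x Sx) scale0r addr0.
Qed.

Section PointedKernel.

Context {d n : nat} {A : 'M[int]_(d, n)}.
Hypothesis pointedA : pointed_kernel A.

Lemma pointed_kernel_int (z : 'cV[int]_n) :
  (forall i, 0 <= z i 0) -> A *m z = 0 -> z = 0.
Proof.
move=> z_ge0 Az0; pose zR := map_mx (fun k : int => k%:~R : Rdefinitions.R) z.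
have zR0 : zR = 0.
  apply: pointedA => [i|]; first by rewrite mxE ler0z.
  by rewrite -map_mxM Az0 map_mx0.
apply/matrixP => i k; have /eqP := congr1 (fun M : 'M_(n, 1) => M i k) zR0.
by rewrite !mxE intr_eq0 => /eqP.
Qed.

Lemma vpsol_le_eq b (x y : 'cV[int]_n) :
  vpsol A b x -> vpsol A b y -> (forall i, x i 0 <= y i 0) -> x = y.
Proof.
move=> [_ Ax] [_ Ay] le_xy; apply/eqP; rewrite eq_sym -subr_eq0; apply/eqP.
apply: pointed_kernel_int => [i|]; first by rewrite !mxE subr_ge0.
by rewrite mulmxBr Ax Ay subrr.
Qed.

Lemma vpsol_finite b : finite_set (vpsol A b).
Proof.
apply/finite_setPn => /card_leP [f].
pose s m : 'cV[int]_n := sval (f (exist _ m (mem_set I))).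
have Ss m : vpsol A b (s m) by exact: set_mem (svalP (f _)).
have [i [k [lt_ik le_ik]]] := dickson (fun m t => absz (s m t 0)).
suff /val_inj/(@inj _ _ _ f) : s i = s k.
  move=> /(_ (mem_set I) (mem_set I))/(congr1 sval)/= eq_ik.
  by rewrite eq_ik ltnn in lt_ik.
apply: vpsol_le_eq (Ss i) (Ss k) _ => t.
have [[si_ge0 _] [sk_ge0 _]] := (Ss i, Ss k).
by rewrite -(gez0_abs (si_ge0 t)) -(gez0_abs (sk_ge0 t)) lez_nat le_ik.
Qed.

End PointedKernel.

Lemma card_le_vpsol_replace_col {d n : nat} (A : 'M[int]_(d, n)) j c' b
    (x0 : 'cV[int]_n) :
  vpsol (replace_col A j c') (col j A) x0 -> 0 < x0 j 0 ->
  vpsol A b #<= vpsol (replace_col A j c') b.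
Proof.
set A' := replace_col A j c' => -[x0_ge0 A'x0] x0j_gt0.
pose w := x0 - delta_mx j 0; pose f (x : 'cV[int]_n) := x + x j 0 *: w.
have w_ge0 i : 0 <= w i 0.
  by rewrite !mxE eqxx andbT; case: eqP => [->|_]; rewrite ?subr_ge0 ?subr0.
have fj x : f x j 0 = x j 0 * x0 j 0 by rewrite /f /w !mxE eqxx /=; ring.
have f_inj : injective f.
  move=> x y fxy; have := congr1 (fun z : 'cV_n => z j 0) fxy.
  rewrite /= !fj => /mulIf xyj; rewrite /f xyj ?lt0r_neq0 // in fxy.
  exact: addIr fxy.
have fS : f @` vpsol A b `<=` vpsol A' b.
  move=> _ [x [x_ge0 Ax] <-]; split=> [i|].
    by rewrite mxE [(_ *: w) _ _]mxE addr_ge0 ?mulr_ge0.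
  rewrite mulmxDr -scalemxAr mulmxBr A'x0 -colE col_replace_col.
  rewrite mul_replace_col Ax -addrA -scalerDr -[col j A - c']opprB subrr.
  by rewrite scaler0 addr0.
by rewrite -(card_le_eql (inj_card_eq (in2W f_inj))); apply: subset_card_le.
Qed.

Theorem mainTheorem16 (d n : nat) (A : 'M[int]_(d, n)) (j : 'I_n)
  (c' : 'cV[int]_d) :
  pointed_kernel A ->
  vpsol A (col j A) #<= vpsol (replace_col A j c') (col j A) ->
  forall b : 'cV[int]_d, (forall i, 0 <= b i 0) ->
    vpsol A b #<= vpsol (replace_col A j c') b.
Proof.
set c := col j A; set A' := replace_col A j c' => pointedA le_c b _.
have [[x0 [Sx0 x0j_gt0]]|no_pos] :=
  pselect (exists x0, vpsol A' c x0 /\ 0 < x0 j 0).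
  exact: card_le_vpsol_replace_col Sx0 x0j_gt0.
have xj0 x : vpsol A' c x -> x j 0 = 0.
  move=> Sx; apply/eqP; rewrite eq_le (proj1 Sx) andbT leNgt.
  by apply/negP => xj_gt0; apply: no_pos; exists x.
have eqS := finite_card_le_sub_eq (vpsol_finite pointedA c)
  (vpsol_replace_col_sub xj0) le_c.
have := xj0 (delta_mx j 0); rewrite eqS => /(_ (vpsol_delta_col A j)).
by rewrite mxE !eqxx.
Qed.
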